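(* For all nonnegative integers $L,M$, \[ \sum_{j\in\mathbb{Z}}(-1)^j q^{\frac{1}{2}j(5j+1)}\mathcal{B}(L,M,2j+1,j) =\sum_{n\geq 0}q^{n^2}\begin{bmatrix}2L+M-n-1\\ 2L-1\end{bmatrix}\begin{bmatrix}L-1\\ n\end{bmatrix}. \]
   Context: $(x;q)_n=\prod_{i=0}^{n-1}(1-xq^i)$, $(q)_n=(q;q)_n$; $\begin{bmatrix}n\\ m\end{bmatrix}=\frac{(q)_n}{(q)_m(q)_{n-m}}$ if $m,n-m$ are nonnegative integers, $0$ otherwise. $\mathcal{B}(L,M,a,b)=\begin{bmatrix}L+M+a-b\\ L+a\end{bmatrix}\begin{bmatrix}L+M-a+b\\ L-a\end{bmatrix}$. *)

From HB Require Import structures.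
From mathcomp Require Import all_boot all_order all_algebra fraction.
Set Implicit Arguments. Unset Strict Implicit. Unset Printing Implicit Defensive.
Import Order.TTheory GRing.Theory Num.Theory.
Local Open Scope ring_scope.

Definition QF : Type := {fraction {poly int}}.

Definition qv : QF := @FracField.tofrac {poly int} 'X.

Definition qpoch (n : nat) : QF := \prod_(i < n) (1 - qv * qv ^+ i).

Definition qbin (n m : int) : QF :=
  if (0 <= m) && (0 <= n - m)
  then qpoch `|n|%N / (qpoch `|m|%N * qpoch `|n - m|%N)
  else 0.

Definition Bq (L M : int) (a b : int) : QF :=
  qbin (L + M + a - b) (L + a) * qbin (L + M - a + b) (L - a).

From HB Require Import structures.
From mathcomp Require Import all_boot all_order all_algebra.
From mathcomp Require Import fraction zify ring.
Set Implicit Arguments. Unset Strict Implicit. Unset Printing Implicit Defensive.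
Import Order.TTheory GRing.Theory Num.Theory.
Local Open Scope ring_scope.

(* A q-Vandermonde-type summation (zsum_vterm) writes B(L,M,2j+1,j) as a sum
   over n of q^((n-j)(n+j)) [L+1;n-j] [L-1;n+j] [2L+M-n;2L].  Exchanging the
   sums over j and n, the pentagonal weights (-1)^j q^(j(3j+1)/2) collapse the
   inner sum to [L-1;n] - q^(2L+1-2n) [L-1;n-1]: this Bailey-type identity is
   proved by induction from the two q-Pascal rules, the cross terms cancelling
   under the reflection j |-> -1-j.  What remains telescopes, by q-Pascal, into
   the right-hand side.  Sums over Z are truncated to [-N, N]; every summand has
   bounded support, so shifts and reflections of the summation index are free
   once N is large. *)

Section SymmetricSums.

Variable R : zmodType.
Implicit Types (f g : int -> R) (K N : nat).

Definition zsum N f : R := \sum_(i < 2 * N + 1) f (i%:Z - N%:Z).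

Definition supported K f := forall j : int, (K%:Z < j) || (j < - K%:Z) -> f j = 0.

Lemma zsum_nat N f : zsum N f = \sum_(0 <= i < (2 * N + 1)%N) f (i%:Z - N%:Z).
Proof. by rewrite big_mkord. Qed.

Lemma eq_zsum N f g : f =1 g -> zsum N f = zsum N g.
Proof. by move=> fg; apply: eq_bigr => i _; rewrite fg. Qed.

Lemma eq_zsum_in N f g :
  (forall j : int, - N%:Z <= j <= N%:Z -> f j = g j) -> zsum N f = zsum N g.
Proof. by move=> fg; apply: eq_bigr => i _; apply: fg; have := ltn_ord i; lia. Qed.

Lemma zsumS N f : zsum N.+1 f = f (- N.+1%:Z) + zsum N f + f N.+1%:Z.
Proof.
rewrite !zsum_nat.
have -> : (2 * N.+1 + 1 = (2 * N + 1).+2)%N by lia.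
rewrite big_nat_recl // big_nat_recr //= addrA.
congr (f _ + _ + f _); [lia | | lia].
by apply: eq_bigr => i _; congr f; lia.
Qed.

Lemma zsum_shift1 N f : zsum N (fun j => f (j + 1)) = zsum N f - f (- N%:Z) + f N.+1%:Z.
Proof.
rewrite !zsum_nat.
have -> : (2 * N + 1 = (2 * N).+1)%N by lia.
rewrite big_nat_recr // [in RHS]big_nat_recl //= [f _ + _]addrC.
have -> : 0%N%:Z - N%:Z = - N%:Z by lia.
rewrite addrK; congr (_ + f _); last by lia.
by apply: eq_bigr => i _; congr f; lia.
Qed.

Lemma zsumN_arg N f : zsum N (fun j => f (- j)) = zsum N f.
Proof.
rewrite !zsum_nat big_nat_rev /= add0n.
by apply: eq_big_nat => i /andP[_ hi]; congr f; lia.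
Qed.

Lemma supported_widen K K' f : supported K f -> (K <= K')%N -> supported K' f.
Proof. by move=> sf le_KK' j hj; apply: sf; lia. Qed.

Lemma supportedN K f : supported K f -> supported K (fun j => f (- j)).
Proof. by move=> sf j hj; apply: sf; lia. Qed.

Lemma zsum_widen K N f : supported K f -> (K <= N)%N -> zsum N f = zsum K f.
Proof.
move=> sf; elim: N => [|N IH] le_KN; first by have -> : K = 0%N by lia.
have [lt_KN1|ge_KN1] := ltnP K N.+1; last by have -> : K = N.+1 by lia.
rewrite zsumS IH; last by lia.
by rewrite !sf ?add0r ?addr0 //; lia.
Qed.

Lemma zsum_shiftn K N (c : nat) f : supported K f -> (K + c < N)%N ->
  zsum N (fun j => f (j + c%:Z)) = zsum N f.
Proof.
move=> sf; elim: c => [|c IH] hN; first by apply: eq_zsum => j; rewrite addr0.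
transitivity (zsum N (fun j => (fun x => f (x + c%:Z)) (j + 1))).
  by apply: eq_zsum => j; congr f; lia.
rewrite (zsum_shift1 _ (fun x => f (x + c%:Z))) IH; last by lia.
by rewrite !sf ?subr0 ?addr0 //; lia.
Qed.

Lemma zsum_shift K N (c : int) f : supported K f -> (K + `|c| < N)%N ->
  zsum N (fun j => f (j + c)) = zsum N f.
Proof.
move=> sf; case: c => c hN; first exact: zsum_shiftn sf hN.
rewrite -[RHS]zsumN_arg -(zsum_shiftn (c := c.+1) (supportedN sf)); last by lia.
by rewrite -zsumN_arg; apply: eq_zsum => j; congr f; lia.
Qed.

Lemma zsum_reflect K N f : supported K f -> (K + 1 < N)%N ->
  zsum N (fun j => f (-1 - j)) = zsum N f.
Proof.
move=> sf hN; rewrite -[RHS]zsumN_arg -(zsum_shift (c := 1) (supportedN sf) hN).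
by apply: eq_zsum => j; congr f; ring.
Qed.

Lemma zsum_single N f : (forall j, j != 0 -> f j = 0) -> zsum N f = f 0.
Proof.
move=> f0; have sf : supported 0 f by move=> j hj; apply: f0; lia.
by rewrite (zsum_widen sf (leq0n N)) /zsum big_ord1 subr0.
Qed.

Lemma zsum_eq0 N f : f =1 (fun=> 0) -> zsum N f = 0.
Proof. by move=> f0; rewrite /zsum big1 // => i _; rewrite f0. Qed.

Lemma zsum_nonneg N f : supported N f -> (forall j, j < 0 -> f j = 0) -> f N%:Z = 0 ->
  zsum N f = \sum_(n < N) f n%:Z.
Proof.
move=> sf fneg fN; rewrite zsum_nat (@big_cat_nat _ _ _ N) //=; last by lia.
rewrite big1_seq ?add0r; last first.
  by move=> i /andP[_]; rewrite mem_index_iota => /andP[_ hi]; apply: fneg; lia.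
have -> : (2 * N + 1 = N + N.+1)%N by lia.
rewrite -{1}[N]add0n big_addn addKn big_nat_recr //= -(big_mkord xpredT (fun n => f n%:Z)).
have -> : (N + N)%N%:Z - N%:Z = N%:Z by lia.
by rewrite fN addr0; apply: eq_big_nat => i _; congr f; lia.
Qed.

Lemma zsumD N f g : zsum N (fun j => f j + g j) = zsum N f + zsum N g.
Proof. exact: big_split. Qed.

Lemma zsumB N f g : zsum N (fun j => f j - g j) = zsum N f - zsum N g.
Proof. exact: sumrB. Qed.

Lemma zsumN N f : zsum N (fun j => - f j) = - zsum N f.
Proof. exact: sumrN. Qed.

Lemma exchange_zsum N N' (F : int -> int -> R) :
  zsum N (fun j => zsum N' (F j)) = zsum N' (fun n => zsum N (F^~ n)).
Proof. exact: exchange_big. Qed.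

End SymmetricSums.

Lemma zsumZ (R : pzRingType) N (c : R) (f : int -> R) :
  zsum N (fun j => c * f j) = c * zsum N f.
Proof. by rewrite /zsum mulr_sumr. Qed.

Lemma qv_neq0 : qv != 0.
Proof. by rewrite /qv tofrac_eq0 polyX_eq0. Qed.

Lemma qvzD (a b : int) : qv ^ (a + b) = qv ^ a * qv ^ b.
Proof. exact: expfzDr qv_neq0. Qed.

Lemma onerBqX_neq0 k : (0 < k)%N -> 1 - qv ^+ k != 0.
Proof.
move=> k_gt0; rewrite /qv -tofracXn -tofrac1 -tofracB tofrac_eq0 subr_eq0.
apply/negP => /eqP/(congr1 (fun p : {poly int} => size p)).
by rewrite size_polyXn size_poly1; case: k k_gt0.
Qed.

Lemma qpoch0 : qpoch 0 = 1.
Proof. exact: big_ord0. Qed.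

Lemma qpochS n : qpoch n.+1 = qpoch n * (1 - qv ^+ n.+1).
Proof. by rewrite /qpoch big_ord_recr -exprS. Qed.

Lemma qpoch_neq0 n : qpoch n != 0.
Proof.
elim: n => [|n IH]; first by rewrite qpoch0 oner_neq0.
by rewrite qpochS mulf_neq0 ?onerBqX_neq0.
Qed.

Lemma qbinE (n m : int) (a b : nat) : m = a%:Z -> n = (a + b)%N%:Z ->
  qbin n m = qpoch (a + b) / (qpoch a * qpoch b).
Proof.
move=> -> ->; rewrite /qbin.
by have -> : (a + b)%N%:Z - a%:Z = b%:Z by lia.
Qed.

Lemma qbin_out (n m : int) : (m < 0) || (n < m) -> qbin n m = 0.
Proof. by move=> hm; rewrite /qbin ifF //; lia. Qed.

Lemma qbin_mul_out (n n' m m' : int) : (n' < m' - m) || (n < m - m') ->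
  qbin n m * qbin n' m' = 0.
Proof.
move=> hm; have [m_in|m_out] := boolP ((0 <= m) && (m <= n)).
  by rewrite (@qbin_out n') ?mulr0 //; lia.
by rewrite qbin_out ?mul0r //; lia.
Qed.

Lemma nat_of_nonneg (n : int) : 0 <= n -> exists a : nat, n = a%:Z.
Proof. by move=> n_ge0; exists `|n|%N; lia. Qed.

Lemma qbin0 (n : int) : 0 <= n -> qbin n 0 = 1.
Proof.
move=> /nat_of_nonneg[a ->]; rewrite (@qbinE _ _ 0 a) //.
by rewrite add0n qpoch0 mul1r divff ?qpoch_neq0.
Qed.

Lemma qbinn (n : int) : 0 <= n -> qbin n n = 1.
Proof.
move=> /nat_of_nonneg[a ->]; rewrite (@qbinE _ _ a 0) ?addn0 //.
by rewrite qpoch0 mulr1 divff ?qpoch_neq0.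
Qed.

Lemma qbin_sub (n m : int) : qbin n (n - m) = qbin n m.
Proof.
have [/andP[m_ge0 le_mn]|m_out] := boolP ((0 <= m) && (m <= n)); last first.
  by rewrite !qbin_out //; lia.
have [a ma] := nat_of_nonneg m_ge0.
have [b nb] : exists b : nat, n = (a + b)%N%:Z by exists `|n - m|%N; lia.
rewrite (qbinE ma nb) (@qbinE _ _ b a); [|lia|lia].
by rewrite addnC [qpoch a * _]mulrC.
Qed.

Lemma pascal_frac_identity (F : fieldType) (A B C x y : F) :
  A != 0 -> B != 0 -> 1 - x != 0 -> 1 - y != 0 ->
  C * (1 - x * y) / (A * (1 - x) * (B * (1 - y)))
  = C / (A * (B * (1 - y))) + x * (C / (A * (1 - x) * B)).
Proof. by move=> *; field; apply/and4P. Qed.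

Lemma qbin_pascal (n m : int) : (n != 0) || (m != 0) ->
  qbin n m = qbin (n - 1) (m - 1) + qv ^ m * qbin (n - 1) m.
Proof.
move=> nm_neq0.
have [/andP[m_ge0 le_mn]|m_out] := boolP ((0 <= m) && (m <= n)); last first.
  by rewrite !qbin_out ?mulr0 ?addr0 //; lia.
have [a ma] := nat_of_nonneg m_ge0.
have [b nb] : exists b : nat, n = (a + b)%N%:Z by exists `|n - m|%N; lia.
case: a ma nb => [|a] ma nb.
  by rewrite ma expr0z mul1r (@qbin_out (n - 1)) ?add0r ?qbin0 //; lia.
case: b nb => [|b] nb.
  have -> : m = n by lia.
  by rewrite (@qbin_out (n - 1) n) ?mulr0 ?addr0 ?qbinn //; lia.
rewrite (qbinE ma nb) (@qbinE _ _ a b.+1) ?(@qbinE _ _ a.+1 b); [|lia..].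
have -> : (a.+1 + b.+1 = (a + b.+1).+1)%N by lia.
have -> : (a.+1 + b = a + b.+1)%N by lia.
rewrite ma -exprnP !qpochS.
have -> : qv ^+ (a + b.+1).+1 = qv ^+ a.+1 * qv ^+ b.+1.
  by rewrite -exprD; congr (_ ^+ _); lia.
by apply: pascal_frac_identity; rewrite ?qpoch_neq0 ?onerBqX_neq0.
Qed.

Lemma qbin_pascal_dual (n m : int) : (n != 0) || (m != 0) ->
  qbin n m = qv ^ (n - m) * qbin (n - 1) (m - 1) + qbin (n - 1) m.
Proof.
move=> nm_neq0; rewrite -qbin_sub qbin_pascal; last by lia.
rewrite addrC -[qbin (n - 1) (n - m)]qbin_sub -[qbin (n - 1) (n - m - 1)]qbin_sub.
by congr (_ * qbin _ _ + qbin _ _); lia.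
Qed.

Lemma qbinS (A : nat) (k : int) : qbin A.+1 k = qbin A (k - 1) + qv ^ k * qbin A k.
Proof. by rewrite qbin_pascal; [congr (qbin _ _ + _ * qbin _ _) | ]; lia. Qed.

Lemma qbinS_dual (A : nat) (k : int) :
  qbin A.+1 k = qv ^ (A.+1%:Z - k) * qbin A (k - 1) + qbin A k.
Proof. by rewrite qbin_pascal_dual; [congr (_ * qbin _ _ + qbin _ _) | ]; lia. Qed.

Definition pent (j : int) : int := ((j * (3 * j + 1)) %/ 2)%Z.

Lemma mul_addr1_even (j : int) : exists k : int, j * (j + 1) = k * 2.
Proof.
have r_ge0 : 0 <= (j %% 2)%Z by apply: modz_ge0.
have r_lt2 : (j %% 2)%Z < 2 by apply: ltz_pmod.
have [r0|r1] : (j %% 2)%Z = 0 \/ (j %% 2)%Z = 1 by lia.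
  by exists ((j %/ 2)%Z * (j + 1)); rewrite {1}(divz_eq j 2) r0; ring.
by exists (j * ((j %/ 2)%Z + 1)); rewrite {2}(divz_eq j 2) r1; ring.
Qed.

Lemma pentE (j : int) : pent j * 2 = j * (3 * j + 1).
Proof.
have [k jk] := mul_addr1_even j.
by rewrite /pent (_ : j * (3 * j + 1) = (j * j + k) * 2) ?mulzK //; nia.
Qed.

Lemma divz_pent_sqr (j : int) : ((j * (5 * j + 1)) %/ 2)%Z = pent j + j * j.
Proof.
have pent2 := pentE j.
by rewrite (_ : j * (5 * j + 1) = (pent j + j * j) * 2) ?mulzK //; nia.
Qed.

Lemma signN (j : int) : (-1 : QF) ^ (- j) = (-1) ^ j.
Proof. by rewrite -exprz_inv invrN1. Qed.

Lemma signNB1 (j : int) : (-1 : QF) ^ (-1 - j) = - (-1) ^ j.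
Proof.
have m1_neq0 : (-1 : QF) != 0 by rewrite oppr_eq0 oner_neq0.
by rewrite (_ : -1 - j = - (j + 1)) ?signN ?expfzDr ?expr1z ?mulrN1 //; ring.
Qed.

Definition pw (j : int) : QF := (-1) ^ j * qv ^ pent j.

Definition pw1 (j : int) : QF := (-1) ^ j * qv ^ (pent j + j).

Lemma pw0 : pw 0 = 1.
Proof. by rewrite /pw /pent !expr0z mulr1. Qed.

Lemma pwN_qvD (j m : int) : pw (- j) * qv ^ (m + j) = qv ^ m * pw j.
Proof.
rewrite /pw signN -mulrA -qvzD mulrCA -qvzD; congr (_ * qv ^ _).
by have := pentE j; have := pentE (- j); nia.
Qed.

Lemma pw_qvD (j c : int) : pw j * qv ^ (c + j) = qv ^ c * pw1 j.
Proof. by rewrite /pw /pw1 -mulrA -qvzD mulrCA -qvzD; congr (_ * qv ^ _); ring. Qed.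

Lemma pw1_reflect (j : int) : pw1 (-1 - j) = - pw1 j.
Proof.
rewrite /pw1 signNB1 mulNr; congr (- (_ * qv ^ _)).
by have := pentE j; have := pentE (-1 - j); nia.
Qed.

Lemma pw1_reflect_qv (j : int) : pw1 (-1 - j) * qv ^ (-1 - j) = - (qv ^ (-1) * pw j).
Proof.
rewrite /pw1 /pw signNB1 !mulNr -mulrA -qvzD mulrCA -qvzD; congr (- (_ * qv ^ _)).
by have := pentE j; have := pentE (-1 - j); nia.
Qed.

Lemma oppr_fixed_eq0 (x : QF) : x = - x -> x = 0.
Proof.
move=> xN; have : x * 2%:R = 0 by rewrite mulr_natr mulr2n {1}xN addNr.
move/eqP; rewrite mulf_eq0 => /orP[/eqP // | /eqP two0].
by move: two0; rewrite -tofrac1 -tofracMn => /eqP; rewrite tofrac_eq0 -polyC_natr polyC_eq0.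
Qed.

(* j |-> -1 - j exchanges the two binomials and changes the sign of pw1. *)
Lemma zsum_pw1_qbin (A : nat) (m : int) N : (A + 2 < N)%N ->
  zsum N (fun j => pw1 j * (qbin A (m - 1 - j) * qbin A (m + j))) = 0.
Proof.
move=> hN; set g := fun j => _.
have sg : supported A g by move=> j hj; rewrite /g qbin_mul_out ?mulr0 //; lia.
apply: oppr_fixed_eq0; rewrite -{1}(zsum_reflect sg) -?zsumN; last by lia.
apply: eq_zsum => j; rewrite /g pw1_reflect mulNr; congr (- (_ * _)).
by rewrite mulrC; congr (qbin _ _ * qbin _ _); lia.
Qed.

Section PentagonalSumStep.

Variables (A N : nat).
Hypothesis hN : (A + 2 < N)%N.
Hypothesis IH : forall m : int,
  zsum N (fun j => pw j * (qbin A (m - j) * qbin A (m + j))) = qbin A m.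

Lemma zsum_pw_qbinS_lo (m : int) :
  zsum N (fun j => pw j * (qbin A (m - 1 - j) * qbin A.+1 (m + j))) = qbin A (m - 1).
Proof.
transitivity (zsum N (fun j => pw j * (qbin A (m - 1 - j) * qbin A (m - 1 + j)))
  + qv ^ m * zsum N (fun j => pw1 j * (qbin A (m - 1 - j) * qbin A (m + j)))).
  rewrite -zsumZ -zsumD; apply: eq_zsum => j.
  rewrite qbinS [qv ^ m * (pw1 j * _)]mulrA -pw_qvD.
  have -> : m + j - 1 = m - 1 + j by lia.
  ring.
by rewrite IH zsum_pw1_qbin // mulr0 addr0.
Qed.

Lemma zsum_pw_qbinS_hi (m : int) :
  zsum N (fun j => pw j * qv ^ (m - j) * (qbin A (m - j) * qbin A.+1 (m + j)))
  = qv ^ m * qbin A m.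
Proof.
pose c := A.+1%:Z - m.
transitivity (qv ^ m * (qv ^ c * zsum N (fun j => pw1 j * (qbin A (m - 1 - j) * qbin A (m + j)))
  + zsum N (fun j => pw j * (qbin A (m - j) * qbin A (m + j))))).
  rewrite -zsumN_arg -zsumZ -zsumD -zsumZ; apply: eq_zsum => j.
  have -> : m - - j = m + j by lia.
  rewrite pwN_qvD qbinS_dual [qv ^ c * (pw1 j * _)]mulrA -pw_qvD.
  have -> : A.+1%:Z - (m - j) = c + j by lia.
  have -> : m - j - 1 = m - 1 - j by lia.
  ring.
by rewrite IH zsum_pw1_qbin // mulr0 add0r.
Qed.

End PentagonalSumStep.

Lemma zsum_pw_qbin (A N : nat) (m : int) : (A + 2 < N)%N ->
  zsum N (fun j => pw j * (qbin A (m - j) * qbin A (m + j))) = qbin A m.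
Proof.
elim: A m => [|A IH] m hN.
  rewrite zsum_single => [|j j_neq0]; last by rewrite qbin_mul_out ?mulr0 //; lia.
  rewrite pw0 mul1r ?subr0 ?addr0.
  have [-> | m_neq0] := eqVneq m 0; first by rewrite qbin0 ?mulr1.
  by rewrite qbin_out ?mulr0 //; lia.
have hN' : (A + 2 < N)%N by lia.
have IHA m' := IH m' hN'.
transitivity (zsum N (fun j => pw j * (qbin A (m - 1 - j) * qbin A.+1 (m + j)))
  + zsum N (fun j => pw j * qv ^ (m - j) * (qbin A (m - j) * qbin A.+1 (m + j)))).
  rewrite -zsumD; apply: eq_zsum => j.
  rewrite qbinS.
  have -> : m - j - 1 = m - 1 - j by lia.
  ring.
by rewrite zsum_pw_qbinS_lo // zsum_pw_qbinS_hi // -qbinS.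
Qed.

Section PentagonalSumShifted.

Variables (A N : nat) (n : int).
Hypothesis hN : (A + 4 < N)%N.

Let hN2 : (A + 2 < N)%N. Proof. by lia. Qed.

Lemma zsum_pw_qbinS (m : int) :
  zsum N (fun j => pw j * (qbin A.+1 (m - j) * qbin A (m + j))) = qbin A m.
Proof.
pose c := A.+1%:Z - m.
transitivity (qv ^ c * zsum N (fun j => pw1 j * (qbin A (m - 1 - j) * qbin A (m + j)))
  + zsum N (fun j => pw j * (qbin A (m - j) * qbin A (m + j)))).
  rewrite -zsumZ -zsumD; apply: eq_zsum => j.
  rewrite qbinS_dual [qv ^ c * (pw1 j * _)]mulrA -pw_qvD.
  have -> : A.+1%:Z - (m - j) = c + j by lia.
  have -> : m - j - 1 = m - 1 - j by lia.
  ring.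
by rewrite zsum_pw1_qbin // mulr0 add0r zsum_pw_qbin.
Qed.

Lemma zsum_pw1_qv_qbin :
  zsum N (fun j => pw1 j * qv ^ j * (qbin A (n - 2 - j) * qbin A (n + j)))
  = - (qv ^ (-1) * qbin A (n - 1)).
Proof.
set g := fun j => _.
have sg : supported A.+1 g by move=> j hj; rewrite /g qbin_mul_out ?mulr0 //; lia.
rewrite -(zsum_reflect sg); last by lia.
rewrite -(zsum_pw_qbin _ hN2) -zsumZ -zsumN; apply: eq_zsum => j.
rewrite /g pw1_reflect_qv.
have -> : n - 2 - (-1 - j) = n - 1 + j by lia.
have -> : n + (-1 - j) = n - 1 - j by lia.
ring.
Qed.

Lemma zsum_pw1_qbinS :
  zsum N (fun j => pw1 j * (qbin A.+1 (n - 1 - j) * qbin A (n + j)))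
  = - (qv ^ (A.+2%:Z - n) * qv ^ (-1) * qbin A (n - 1)).
Proof.
pose c := A.+2%:Z - n.
transitivity (qv ^ c * zsum N (fun j => pw1 j * qv ^ j * (qbin A (n - 2 - j) * qbin A (n + j)))
  + zsum N (fun j => pw1 j * (qbin A (n - 1 - j) * qbin A (n + j)))).
  rewrite -zsumZ -zsumD; apply: eq_zsum => j.
  rewrite qbinS_dual.
  have -> : A.+1%:Z - (n - 1 - j) = c + j by lia.
  have -> : n - 1 - j - 1 = n - 2 - j by lia.
  by rewrite qvzD; ring.
by rewrite zsum_pw1_qv_qbin zsum_pw1_qbin // addr0 mulrN mulrA.
Qed.

Lemma zsum_pw_qbinSS :
  zsum N (fun j => pw j * (qbin A.+2 (n - j) * qbin A (n + j)))
  = qbin A n - qv ^ (2 * A%:Z + 3 - 2 * n) * qbin A (n - 1).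
Proof.
pose c := A.+2%:Z - n.
transitivity (qv ^ c * zsum N (fun j => pw1 j * (qbin A.+1 (n - 1 - j) * qbin A (n + j)))
  + zsum N (fun j => pw j * (qbin A.+1 (n - j) * qbin A (n + j)))).
  rewrite -zsumZ -zsumD; apply: eq_zsum => j.
  rewrite qbinS_dual [qv ^ c * (pw1 j * _)]mulrA -pw_qvD.
  have -> : A.+2%:Z - (n - j) = c + j by lia.
  have -> : n - j - 1 = n - 1 - j by lia.
  ring.
rewrite zsum_pw1_qbinS zsum_pw_qbinS.
have -> : 2 * A%:Z + 3 - 2 * n = c + c + -1 by lia.
by rewrite !qvzD; ring.
Qed.

End PentagonalSumShifted.

Lemma trinomial_frac_identity (F : fieldType) (X Y Z U V W : F) :
  X != 0 -> Y != 0 -> Z != 0 -> U != 0 -> V != 0 ->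
  X / (Y * Z) * (W / (X * V)) = U / (Z * V) * (W / (U * Y)).
Proof. by move=> *; field; apply/and5P. Qed.

Lemma qbin_trinomial (Q : nat) (d m : int) :
  qbin (d + m) m * qbin (Q%:Z + m) (m + d) = qbin Q d * qbin (Q%:Z + m) Q.
Proof.
have [/andP[/andP[m_ge0 d_ge0] le_dQ] | out] := boolP ((0 <= m) && (0 <= d) && (d <= Q)).
  have [a da] := nat_of_nonneg d_ge0; have [c mc] := nat_of_nonneg m_ge0.
  have [b Qab] : exists b : nat, Q = (a + b)%N by exists (Q - a)%N; lia.
  rewrite (@qbinE (d + m) m c a) ?(@qbinE (Q%:Z + m) (m + d) (c + a) b); [|lia..].
  rewrite (@qbinE Q d a b) ?(@qbinE (Q%:Z + m) Q (a + b) c); [|lia..].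
  rewrite (_ : (c + a + b = a + b + c)%N); last by lia.
  by apply: trinomial_frac_identity; rewrite qpoch_neq0.
have [m_lt0 | m_ge0] := ltP m 0.
  by rewrite (@qbin_out (d + m)) ?(@qbin_out (Q%:Z + m) Q) ?mul0r ?mulr0 //; lia.
have [d_lt0 | d_ge0] := ltP d 0.
  by rewrite (@qbin_out (d + m)) ?(@qbin_out Q d) ?mul0r ?mulr0 //; lia.
by rewrite (@qbin_out (Q%:Z + m)) ?(@qbin_out Q d) ?mul0r ?mulr0 //; lia.
Qed.

Definition vterm (P Q : nat) (d m r : int) : QF :=
  qv ^ (r * (r + d)) *
  (qbin P r * (qbin Q (r + d) * qbin (P%:Z + Q%:Z + m - r) (P%:Z + Q%:Z))).

Lemma supported_vterm P Q d m : supported P (vterm P Q d m).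
Proof. by move=> r hr; rewrite /vterm (@qbin_out P r) ?mul0r ?mulr0 //; lia. Qed.

Lemma zsum_vterm0 (P Q N : nat) (d : int) :
  zsum N (vterm P Q d 0) = qbin (P%:Z + d) 0 * qbin Q d.
Proof.
rewrite zsum_single => [|r r_neq0]; last first.
  have [r_lt0 | r_ge0] := ltP r 0.
    by rewrite /vterm (@qbin_out P r) ?mul0r ?mulr0 //; lia.
  by rewrite /vterm (@qbin_out (P%:Z + Q%:Z + 0 - r)) ?mulr0 //; lia.
rewrite /vterm mul0r expr0z mul1r qbin0 // mul1r add0r addr0 subr0 qbinn ?mulr1 //.
have [Pd_ge0 | Pd_lt0] := lerP 0 (P%:Z + d); first by rewrite qbin0 ?mul1r.
by rewrite (@qbin_out Q d) ?mulr0 //; lia.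
Qed.

Lemma zsum_vtermS (P Q N : nat) (d m : int) : (P + 3 < N)%N ->
  zsum N (vterm P.+1 Q d m)
  = zsum N (vterm P Q d m) + qv ^ (P.+1%:Z + d) * zsum N (vterm P Q.+1 (d + 1) (m - 1)).
Proof.
move=> hN; pose P1 := P.+1%:Z.
pose Y r := qbin (P1 + Q%:Z + m - r) (P1 + Q%:Z).
pose fA r := qv ^ (P1 + Q%:Z) * qv ^ (r * (r + d)) *
  (qbin P r * (qbin Q (r + d) * qbin (P%:Z + Q%:Z + m - r) (P1 + Q%:Z))).
pose fB r := qv ^ (r * (r + d)) * qv ^ (P1 - r) * (qbin P (r - 1) * (qbin Q (r + d) * Y r)).
have splitP r : vterm P.+1 Q d m r = vterm P Q d m r + fA r + fB r.
  rewrite /vterm /fA /fB /Y qbinS_dual (@qbin_pascal (P1 + Q%:Z + m - r)); last by lia.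
  have -> : P1 + Q%:Z + m - r - 1 = P%:Z + Q%:Z + m - r by lia.
  have -> : P1 + Q%:Z - 1 = P%:Z + Q%:Z by lia.
  by rewrite /P1; ring.
have splitQ r : qv ^ (P1 + d) * vterm P Q.+1 (d + 1) (m - 1) r = fA r + fB (r + 1).
  rewrite /vterm /fA /fB /Y qbinS_dual.
  have -> : Q.+1%:Z - (r + (d + 1)) = - r - d + Q%:Z by lia.
  have -> : r + (d + 1) - 1 = r + d by lia.
  have -> : r + 1 - 1 = r by lia.
  have -> : r + 1 + d = r + (d + 1) by lia.
  have -> : P%:Z + Q.+1%:Z + (m - 1) - r = P%:Z + Q%:Z + m - r by lia.
  have -> : P%:Z + Q.+1%:Z = P1 + Q%:Z by lia.
  have -> : P1 + Q%:Z + m - (r + 1) = P%:Z + Q%:Z + m - r by lia.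
  have -> : qv ^ (P1 + Q%:Z) * qv ^ (r * (r + d))
      = qv ^ (P1 + d) * qv ^ (r * (r + (d + 1))) * qv ^ (- r - d + Q%:Z).
    by rewrite -!qvzD; congr (qv ^ _); lia.
  have -> : qv ^ ((r + 1) * (r + (d + 1))) * qv ^ (P1 - (r + 1))
      = qv ^ (P1 + d) * qv ^ (r * (r + (d + 1))).
    by rewrite -!qvzD; congr (qv ^ _); lia.
  ring.
have sB : supported P.+1 fB.
  by move=> r hr; rewrite /fB (@qbin_out P (r - 1)) ?mul0r ?mulr0 //; lia.
rewrite (eq_zsum _ splitP) !zsumD -zsumZ (eq_zsum _ splitQ) zsumD -addrA.
by rewrite (zsum_shift (c := 1) sB) //; lia.
Qed.

Lemma zsum_vterm (P Q N : nat) (d m : int) : (P + 2 < N)%N ->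
  zsum N (vterm P Q d m) = qbin (P%:Z + d + m) m * qbin (Q%:Z + m) (m + d).
Proof.
elim: P Q d m => [|P IH] Q d m hN.
  rewrite zsum_single => [|r r_neq0]; last first.
    by rewrite /vterm (@qbin_out 0 r) ?mul0r ?mulr0 //; lia.
  rewrite /vterm mul0r expr0z mul1r qbin0 // mul1r.
  have -> : 0%N%:Z + Q%:Z + m - 0 = Q%:Z + m by lia.
  have -> : 0%N%:Z + Q%:Z = Q%:Z by lia.
  have -> : 0%N%:Z + d = d by lia.
  by rewrite qbin_trinomial mulrC.
have [-> | m_neq0] := eqVneq m 0; first by rewrite zsum_vterm0 !addr0 add0r.
rewrite zsum_vtermS ?IH; [|lia..].
rewrite (@qbin_pascal_dual (P.+1%:Z + d + m) m); last by lia.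
have -> : P%:Z + (d + 1) + (m - 1) = P.+1%:Z + d + m - 1 by lia.
have -> : P%:Z + d + m = P.+1%:Z + d + m - 1 by lia.
have -> : Q.+1%:Z + (m - 1) = Q%:Z + m by lia.
have -> : m - 1 + (d + 1) = m + d by lia.
have -> : P.+1%:Z + d + m - m = P.+1%:Z + d by lia.
ring.
Qed.

Lemma Bq0_eq0 (M : nat) (j : int) : Bq 0 M (2 * j + 1) j = 0.
Proof.
rewrite /Bq; have [j_ge0 | j_lt0] := lerP 0 (2 * j + 1).
  by rewrite (@qbin_out _ (0 - (2 * j + 1))) ?mulr0 //; lia.
by rewrite (@qbin_out _ (0 + (2 * j + 1))) ?mul0r //; lia.
Qed.

Lemma Bq_zsum (K M N : nat) (j : int) : (K + 4 + `|j| < N)%N ->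
  Bq K.+1 M (2 * j + 1) j
  = zsum N (fun n => qv ^ ((n - j) * (n + j)) * (qbin K.+2 (n - j) *
      (qbin K (n + j) * qbin (2 * K.+1%:Z + M%:Z - n) (2 * K.+1%:Z)))).
Proof.
move=> hN; rewrite /Bq.
rewrite -qbin_sub -[qbin (K.+1%:Z + M%:Z - _ + j) _]qbin_sub.
have -> : K.+1%:Z + M%:Z + (2 * j + 1) - j - (K.+1%:Z + (2 * j + 1))
    = M%:Z - j by lia.
have -> : K.+1%:Z + M%:Z + (2 * j + 1) - j = K.+2%:Z + 2 * j + (M%:Z - j) by lia.
have -> : K.+1%:Z + M%:Z - (2 * j + 1) + j - (K.+1%:Z - (2 * j + 1))
    = M%:Z - j + 2 * j by lia.
have -> : K.+1%:Z + M%:Z - (2 * j + 1) + j = K%:Z + (M%:Z - j) by lia.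
rewrite -(@zsum_vterm K.+2 K N); last by lia.
rewrite -(zsum_shift (c := - j) (@supported_vterm K.+2 K (2 * j) (M%:Z - j))); last by lia.
apply: eq_zsum => n; rewrite /vterm.
have -> : n + - j + 2 * j = n + j by lia.
have -> : K.+2%:Z + K%:Z + (M%:Z - j) - (n + - j) = 2 * K.+1%:Z + M%:Z - n by lia.
by have -> : K.+2%:Z + K%:Z = 2 * K.+1%:Z by lia.
Qed.

Lemma zsum_pent_Bq (K M N N' : nat) : (K + 4 < N)%N -> (N + K + 4 < N')%N ->
  zsum N (fun j => (-1) ^ j * qv ^ ((j * (5 * j + 1)) %/ 2)%Z * Bq K.+1 M (2 * j + 1) j)
  = zsum N' (fun n => qv ^ (n * n) * qbin (2 * K.+1%:Z + M%:Z - n) (2 * K.+1%:Z)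
      * (qbin K n - qv ^ (2 * K%:Z + 3 - 2 * n) * qbin K (n - 1))).
Proof.
move=> hN hN'; pose Y n := qbin (2 * K.+1%:Z + M%:Z - n) (2 * K.+1%:Z).
transitivity (zsum N (fun j => zsum N' (fun n =>
  qv ^ (n * n) * Y n * (pw j * (qbin K.+2 (n - j) * qbin K (n + j)))))).
  apply: eq_zsum_in => j hj; rewrite (@Bq_zsum K M N') -?zsumZ; last by lia.
  apply: eq_zsum => n; rewrite divz_pent_sqr /pw /Y.
  have -> : n * n = j * j + (n - j) * (n + j) by ring.
  by rewrite !qvzD; ring.
rewrite exchange_zsum; apply: eq_zsum => n.
by rewrite zsumZ zsum_pw_qbinSS //; lia.
Qed.

Lemma zsum_qbin_telescope (K M N : nat) : (K + 2 < N)%N ->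
  zsum N (fun n => qv ^ (n * n) * qbin (2 * K.+1%:Z + M%:Z - n) (2 * K.+1%:Z)
      * (qbin K n - qv ^ (2 * K%:Z + 3 - 2 * n) * qbin K (n - 1)))
  = zsum N (fun n => qv ^ (n * n) * qbin (2 * K.+1%:Z + M%:Z - n - 1) (2 * K.+1%:Z - 1)
      * qbin K n).
Proof.
move=> hN; pose Y n := qbin (2 * K.+1%:Z + M%:Z - n) (2 * K.+1%:Z).
pose g n := qv ^ (n * n) * qv ^ (2 * K%:Z + 3 - 2 * n) * (Y n * qbin K (n - 1)).
have sg : supported K.+1 g by move=> n hn; rewrite /g (@qbin_out K (n - 1)) ?mulr0 //; lia.
transitivity (zsum N (fun n => qv ^ (n * n) * Y n * qbin K n) - zsum N (fun n => g (n + 1))).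
  rewrite (zsum_shift (c := 1) sg) -?zsumB; last by lia.
  by apply: eq_zsum => n; rewrite /g /Y; ring.
rewrite -zsumB; apply: eq_zsum => n; rewrite /g /Y.
rewrite (@qbin_pascal (2 * K.+1%:Z + M%:Z - n)); last by lia.
have -> : n + 1 - 1 = n by lia.
have -> : 2 * K.+1%:Z + M%:Z - (n + 1) = 2 * K.+1%:Z + M%:Z - n - 1 by lia.
have -> : qv ^ ((n + 1) * (n + 1)) * qv ^ (2 * K%:Z + 3 - 2 * (n + 1))
    = qv ^ (n * n) * qv ^ (2 * K.+1%:Z) by rewrite -!qvzD; congr (qv ^ _); lia.
ring.
Qed.

Lemma sum_qbin_zsum (K M N N' : nat) : (K < N)%N -> (N <= N')%N ->
  \sum_(n < N) qv ^+ (n ^ 2) * qbin (2 * K.+1%:Z + M%:Z - n%:Z - 1) (2 * K.+1%:Z - 1)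
                * qbin (K.+1%:Z - 1) n%:Z
  = zsum N' (fun n => qv ^ (n * n) * qbin (2 * K.+1%:Z + M%:Z - n - 1) (2 * K.+1%:Z - 1)
      * qbin K n).
Proof.
move=> hN hN'; set h := fun n : int => _.
have sh : supported K h by move=> n hn; rewrite /h (@qbin_out K n) ?mulr0 //; lia.
rewrite (zsum_widen sh (leq_trans (ltnW hN) hN')) -(zsum_widen sh (ltnW hN)) zsum_nonneg.
- apply: eq_bigr => n _; rewrite /h -PoszM -exprnP mulnn.
  by have -> : K.+1%:Z - 1 = K%:Z by lia.
- exact: supported_widen sh (ltnW hN).
- by move=> n n_lt0; rewrite /h (@qbin_out K n) ?mulr0 //; lia.
- by rewrite /h (@qbin_out K N) ?mulr0 //; lia.
Qed.

Theorem lemma5p1 (L M : nat) :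
  exists N0 : nat, forall N : nat, (N0 <= N)%N ->
    \sum_(i < 2 * N + 1)
       (let j : int := i%:Z - N%:Z in
        (-1) ^ j * qv ^ ((j * (5 * j + 1)) %/ 2)%Z * Bq L M (2 * j + 1) j)
    = \sum_(n < N)
       qv ^+ (n ^ 2) * qbin (2 * L%:Z + M%:Z - n%:Z - 1) (2 * L%:Z - 1)
                     * qbin (L%:Z - 1) n%:Z.
Proof.
exists (L + 4)%N => N hN.
rewrite -[LHS]/(zsum N (fun j =>
  (-1) ^ j * qv ^ ((j * (5 * j + 1)) %/ 2)%Z * Bq L M (2 * j + 1) j)).
case: L hN => [|K] hN.
  rewrite zsum_eq0 => [|j]; last by rewrite Bq0_eq0 mulr0.
  by rewrite big1 // => n _; rewrite (@qbin_out (0%N%:Z - 1)) ?mulr0 //; lia.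
rewrite (@zsum_pent_Bq K M N (N + K + 5)) ?zsum_qbin_telescope; [|lia..].
by rewrite (@sum_qbin_zsum K M N (N + K + 5)) //; lia.
Qed.
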